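(* Let $X$ be a set and let $A$ and $B$ be Banach algebras of complex-valued functions on $X$ (with pointwise operations), each containing the constant functions on $X$. Let $\psi:A\to B$ be a continuous algebra homomorphism and $\varphi\in\Delta(B)$. If $f\in A$ satisfies $P(f)=0$ for some nonzero polynomial $P$ in one complex variable, then $D(f)=0$ for every $(\varphi,\psi)$-point derivation $D$ on $A$.
   Context: $\Delta(B)$ denotes the set of all nonzero multiplicative linear functionals on $B$. A bounded linear functional $D$ on $A$ is a $(\varphi,\psi)$-point derivation if $D(ab)=\varphi(\psi(a))\,D(b)+\varphi(\psi(b))\,D(a)$ for all $a,b\in A$. For $P(z)=\sum_{k=0}^{n}c_kz^k$, $P(f)=\sum_{k=0}^n c_k f^k$ with $f^0$ the constant function $1$. *)

From mathcomp Require Import all_boot all_order all_algebra.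
From mathcomp Require Import complex.
From mathcomp Require Import reals.
Set Implicit Arguments. Unset Strict Implicit. Unset Printing Implicit Defensive.
Import Order.TTheory GRing.Theory Num.Theory.
Local Open Scope ring_scope.
Local Open Scope complex_scope.

Section Defs.
Variable (R : realType) (X : Type).
Local Notation C := R[i].
Local Notation F := (X -> C).

Record funBanachAlg := FunBanachAlg {
  inA : F -> Prop;
  anrm : F -> R;
  mem_cst : forall c : C, inA (fun _ => c);
  mem_add : forall f g, inA f -> inA g -> inA (fun x => f x + g x);
  mem_scale : forall (c : C) f, inA f -> inA (fun x => c * f x);
  mem_mul : forall f g, inA f -> inA g -> inA (fun x => f x * g x);
  nrm_ge0 : forall f, inA f -> 0 <= anrm f;
  nrm_eq0 : forall f, inA f -> anrm f = 0 -> f = (fun _ => 0);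
  nrm_add : forall f g, inA f -> inA g -> anrm (fun x => f x + g x) <= anrm f + anrm g;
  nrm_scale : forall (c : C) f, inA f ->
      anrm (fun x => c * f x) = complex.Re `|c| * anrm f;
  nrm_mul : forall f g, inA f -> inA g -> anrm (fun x => f x * g x) <= anrm f * anrm g;
  complete : forall u : nat -> F, (forall n, inA (u n)) ->
    (forall e : R, 0 < e -> exists N, forall m n, (N <= m)%N -> (N <= n)%N ->
        anrm (fun x => u m x - u n x) < e) ->
    exists2 l, inA l & forall e : R, 0 < e -> exists N, forall n, (N <= n)%N ->
        anrm (fun x => u n x - l x) < e
}.

Definition cont_alg_hom (A B : funBanachAlg) (psi : F -> F) : Prop :=
  [/\ forall f, inA A f -> inA B (psi f),
      forall f g, inA A f -> inA A g -> psi (fun x => f x + g x) = (fun x => psi f x + psi g x),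
      forall (c : C) f, inA A f -> psi (fun x => c * f x) = (fun x => c * psi f x),
      forall f g, inA A f -> inA A g -> psi (fun x => f x * g x) = (fun x => psi f x * psi g x)
    & forall f, inA A f -> forall e : R, 0 < e -> exists2 d : R, 0 < d &
        forall g, inA A g -> anrm A (fun x => g x - f x) < d ->
          anrm B (fun x => psi g x - psi f x) < e].

Definition in_Delta (B : funBanachAlg) (phi : F -> C) : Prop :=
  [/\ forall f g, inA B f -> inA B g -> phi (fun x => f x + g x) = phi f + phi g,
      forall (c : C) f, inA B f -> phi (fun x => c * f x) = c * phi f,
      forall f g, inA B f -> inA B g -> phi (fun x => f x * g x) = phi f * phi g
    & exists2 f, inA B f & phi f != 0].

Definition point_derivation (A : funBanachAlg) (phi : F -> C) (psi : F -> F)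
    (D : F -> C) : Prop :=
  [/\ forall f g, inA A f -> inA A g -> D (fun x => f x + g x) = D f + D g,
      forall (c : C) f, inA A f -> D (fun x => c * f x) = c * D f,
      exists M : R, forall f, inA A f -> complex.Re `|D f| <= M * anrm A f
    & forall f g, inA A f -> inA A g ->
        D (fun x => f x * g x) = phi (psi f) * D g + phi (psi g) * D f].

Definition poly_app (P : {poly C}) (f : F) : F :=
  fun x => \sum_(k < size P) P`_k * f x ^+ k.

End Defs.

Arguments cont_alg_hom {R X} A B psi.
Arguments in_Delta {R X} B phi.
Arguments point_derivation {R X} A phi psi D.

From mathcomp Require Import all_boot all_order all_algebra.
From mathcomp Require Import complex.
From mathcomp Require Import reals boolp.
Set Implicit Arguments. Unset Strict Implicit. Unset Printing Implicit Defensive.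
Import GRing.Theory Num.Theory.
Local Open Scope ring_scope.
Local Open Scope complex_scope.

(* The composite chi = phi o psi is multiplicative and linear on A, and D is a
   chi-derivation.  Since chi(1) is idempotent, either chi vanishes on A, and then
   so does D, or chi is unital.  In the unital case chi(Q(f)) = Q(lambda) with
   lambda = chi(f); writing P = Q (X - lambda)^m with Q(lambda) != 0, the function
   (f - lambda) Q(f) vanishes identically, and the Leibniz rule applied to it
   gives Q(lambda) D(f) = 0. *)

Lemma root_poly_app (R : realType) (X : Type) (P : {poly R[i]}) (f : X -> R[i]) :
  poly_app P f = (fun _ => 0) -> forall x, root P (f x).
Proof. by move=> Pf x; apply/rootP; rewrite horner_coef -[RHS]/(_ x) -Pf. Qed.

Lemma XsubC_factor_root_eq0 (K : idomainType) (P Q : {poly K}) (a z : K) (m : nat) :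
  P = Q * ('X - a%:P) ^+ m -> root P z -> (z - a) * Q.[z] = 0.
Proof.
move=> -> /rootP; rewrite hornerM horner_exp hornerXsubC => /eqP.
by rewrite mulf_eq0 expf_eq0 => /orP[/eqP -> | /andP[_ /eqP ->]]; rewrite ?mulr0 ?mul0r.
Qed.

Lemma idem_eq0_or1 (K : idomainType) (u : K) : u * u = u -> u = 0 \/ u = 1.
Proof.
move=> uu; have /eqP : u * (u - 1) = 0 by rewrite mulrBr mulr1 uu subrr.
by rewrite mulf_eq0 subr_eq0 => /orP[] /eqP; [left | right].
Qed.

Lemma mem_horner (R : realType) (X : Type) (A : funBanachAlg R X) (f : X -> R[i])
    (Q : {poly R[i]}) :
  inA A f -> inA A (fun x => Q.[f x]).
Proof.
move=> Af; elim/poly_ind: Q => [|Q c AQ].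
  by under [fun x => _]funext do rewrite horner0; apply: mem_cst.
under [fun x => _]funext do rewrite hornerMXaddC.
exact: (mem_add (mem_mul AQ Af) (mem_cst A c)).
Qed.

Section CharacterDerivation.
Variables (R : realType) (X : Type) (A : funBanachAlg R X).
Local Notation C := R[i].
Local Notation F := (X -> C).
Local Notation one := (fun _ : X => 1 : C).

Variables (chi D : F -> C).
Hypothesis chiD : forall f g, inA A f -> inA A g ->
  chi (fun x => f x + g x) = chi f + chi g.
Hypothesis chiZ : forall (c : C) f, inA A f -> chi (fun x => c * f x) = c * chi f.
Hypothesis chiM : forall f g, inA A f -> inA A g ->
  chi (fun x => f x * g x) = chi f * chi g.
Hypothesis DD : forall f g, inA A f -> inA A g -> D (fun x => f x + g x) = D f + D g.
Hypothesis DZ : forall (c : C) f, inA A f -> D (fun x => c * f x) = c * D f.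
Hypothesis DM : forall f g, inA A f -> inA A g ->
  D (fun x => f x * g x) = chi f * D g + chi g * D f.

Let A1 : inA A one := mem_cst A 1.

Lemma fun_mulr1 (g : F) : (fun x => g x * one x) = g.
Proof. by apply: funext => x; rewrite mulr1. Qed.

Lemma cst_fun_mul1 (c : C) : (fun _ => c) = (fun x => c * one x).
Proof. by apply: funext => x; rewrite mulr1. Qed.

Lemma chi_mul1 g : inA A g -> chi g = chi g * chi one.
Proof. by move=> Ag; rewrite -chiM // fun_mulr1. Qed.

Lemma D_eq0_of_chi1_eq0 : chi one = 0 -> forall f, inA A f -> D f = 0.
Proof.
move=> chi10 f Af; have chi0 g : inA A g -> chi g = 0.
  by move=> Ag; rewrite chi_mul1 // chi10 mulr0.
by rewrite -[f]fun_mulr1 DM // !chi0 // !mul0r addr0.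
Qed.

Section UnitalCharacter.
Hypothesis chi1 : chi one = 1.

Lemma chi_cst (c : C) : chi (fun _ => c) = c.
Proof. by rewrite cst_fun_mul1 chiZ // chi1 mulr1. Qed.

Lemma D1 : D one = 0.
Proof.
have := DM A1 A1; rewrite fun_mulr1 chi1 !mul1r -{1}[D one]addr0.
by move=> /addrI <-.
Qed.

Lemma D_cst (c : C) : D (fun _ => c) = 0.
Proof. by rewrite cst_fun_mul1 DZ // D1 mulr0. Qed.

Lemma chi_horner f (Q : {poly C}) : inA A f -> chi (fun x => Q.[f x]) = Q.[chi f].
Proof.
move=> Af; elim/poly_ind: Q => [|Q c IH].
  by under [fun x => _]funext do rewrite horner0; rewrite chi_cst horner0.
under [fun x => _]funext do rewrite hornerMXaddC.
have AQ := mem_horner Q Af.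
rewrite chiD; [|exact: mem_mul | exact: mem_cst].
by rewrite chiM // IH chi_cst hornerMXaddC.
Qed.

Lemma D_eq0_of_root_unital f (P : {poly C}) :
  inA A f -> P != 0 -> (forall x, root P (f x)) -> D f = 0.
Proof.
move=> Af Pn0 Pf; set lam := chi f.
have [m [Q /implyP/(_ Pn0) Qlam PE]] := multiplicity_XsubC P lam.
have Alam : inA A (fun _ => - lam) := mem_cst A (- lam).
have AQ := mem_horner Q Af.
have Df_lam : D (fun x => f x - lam) = D f by rewrite DD // D_cst addr0.
have chif_lam : chi (fun x => f x - lam) = 0 by rewrite chiD // chi_cst subrr.
have vanish : (fun x => (f x - lam) * Q.[f x]) = (fun _ => 0).
  by apply: funext => x; apply: XsubC_factor_root_eq0 PE (Pf x).
have := DM (mem_add Af Alam) AQ.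
rewrite vanish D_cst chif_lam mul0r add0r chi_horner // Df_lam => /esym/eqP.
by rewrite mulf_eq0 -[Q.[_] == 0]/(root Q lam) (negbTE Qlam) => /eqP.
Qed.

End UnitalCharacter.

Lemma D_eq0_of_root f (P : {poly C}) :
  inA A f -> P != 0 -> (forall x, root P (f x)) -> D f = 0.
Proof.
move=> Af Pn0 Pf; have [chi10 | chi11] := idem_eq0_or1 (esym (chi_mul1 A1)).
  exact: D_eq0_of_chi1_eq0.
exact: (D_eq0_of_root_unital chi11 Af Pn0).
Qed.

End CharacterDerivation.

Theorem proposition2p5 (R : realType) (X : Type) (A B : funBanachAlg R X)
  (psi : (X -> R[i]) -> (X -> R[i])) (phi : (X -> R[i]) -> R[i])
  (f : X -> R[i]) (P : {poly R[i]}) :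
  cont_alg_hom A B psi -> in_Delta B phi -> inA A f ->
  P != 0 -> poly_app P f = (fun _ => 0) ->
  forall D : (X -> R[i]) -> R[i], point_derivation A phi psi D -> D f = 0.
Proof.
move=> [psiB psiD psiZ psiM _] [phiD phiZ phiM _] Af Pn0 Pf D [DD DZ _ DM].
pose chi g := phi (psi g).
have chiD g h : inA A g -> inA A h -> chi (fun x => g x + h x) = chi g + chi h.
  by move=> Ag Ah; rewrite /chi psiD // phiD //; apply: psiB.
have chiZ c g : inA A g -> chi (fun x => c * g x) = c * chi g.
  by move=> Ag; rewrite /chi psiZ // phiZ //; apply: psiB.
have chiM g h : inA A g -> inA A h -> chi (fun x => g x * h x) = chi g * chi h.
  by move=> Ag Ah; rewrite /chi psiM // phiM //; apply: psiB.
exact: (D_eq0_of_root chiD chiZ chiM DD DZ DM Af Pn0 (root_poly_app Pf)).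
Qed.
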